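(* Let $k\ge2$ and $p=p(n)\in[0,1]$. For every $\varepsilon>0$, with probability tending to $1$ as $n\to\infty$, the random cochain $a$ used to construct $Y^k(n,p)$ is a $\mathbb Z_2$-cocycle of $Y^k(n,p)$ (i.e. $\delta a=0$) and satisfies $\|[a]\|\ge\frac12-\varepsilon$; in particular $\tilde H^{k-1}(Y^k(n,p);\mathbb Z_2)\ne0$.
   Context: $Y^k(n,p)$ is the random $k$-dimensional complex on vertex set $[n]$ with complete $(k-1)$-skeleton constructed as follows: choose $a:\binom{[n]}{k}\to\mathbb Z_2$ with values independent and uniform; call $H\in\binom{[n]}{k+1}$ good if $H$ contains an even number of $k$-subsets $F$ with $a(F)=1$; each good $H$ is added as a $k$-face independently with probability $p$. Faces are oriented by a fixed vertex order; over $\mathbb Z_2$ the coboundary is $(\delta f)(H)=\sum_{G\subset H,|G|=|H|-1}f(G)$. For $f\in C^{i}(X;\mathbb Z_2)$, $\|f\|=|\{F\in X_i:f(F)=1\}|/|X_i|$ and $\|[f]\|=\min\{\|f+\delta g\|:g\in C^{i-1}(X;\mathbb Z_2)\}$. *)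

From HB Require Import structures.
From mathcomp Require Import all_boot all_order all_algebra.
Set Implicit Arguments. Unset Strict Implicit. Unset Printing Implicit Defensive.
Import Order.TTheory GRing.Theory Num.Theory.
Local Open Scope ring_scope.

(* j-element subsets of the vertex set [n] = 'I_n, i.e. the (j-1)-faces. *)
Notation ksub n j := {S : {set 'I_n} | #|S| == j}.

(* Z_2-cochains on (j-1)-faces are boolean functions on j-subsets.
   Coboundary from cochains on j-subsets to functions on l-subsets
   (used with l = j+1): (delta g)(F) = sum_{G subset F} g(G) mod 2. *)
Definition cobound (n j l : nat) (g : {ffun ksub n j -> bool}) :
  {ffun ksub n l -> bool} :=
  [ffun F : ksub n l => \big[addb/false]_(G : ksub n j | val G \subset val F) g G].

Definition good (n k : nat) (a : {ffun ksub n k -> bool}) : {set ksub n k.+1} :=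
  [set H : ksub n k.+1 | ~~ odd #|[set F : ksub n k | (val F \subset val H) && a F]|].

(* Probability of the outcome (a, X) where X is the set of k-faces of
   Y^k(n,p): a uniform, each good H kept independently with prob. p. *)
Definition weight (R : realFieldType) (n k : nat) (p : R)
  (a : {ffun ksub n k -> bool}) (X : {set ksub n k.+1}) : R :=
  (2%:R^-1) ^+ #|{: ksub n k}| *
  (if X \subset good a
   then p ^+ #|X| * (1 - p) ^+ (#|good a| - #|X|)
   else 0).

Definition Prob (R : realFieldType) (n k : nat) (p : R)
  (E : {ffun ksub n k -> bool} -> {set ksub n k.+1} -> bool) : R :=
  \sum_(a : {ffun ksub n k -> bool}) \sum_(X : {set ksub n k.+1})
     weight p a X * (E a X)%:R.

Definition cocycle_on (n k : nat) (X : {set ksub n k.+1})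
  (f : {ffun ksub n k -> bool}) : bool :=
  [forall H in X, @cobound n k k.+1 f H == false].

(* normalized Hamming norm on C^{k-1}: all k-subsets are (k-1)-faces. *)
Definition cnorm (R : realFieldType) (n k : nat) (f : {ffun ksub n k -> bool}) : R :=
  #|[set F | f F]|%:R / #|{: ksub n k}|%:R.

Definition addc (n k : nat) (f g : {ffun ksub n k -> bool}) : {ffun ksub n k -> bool} :=
  [ffun F => f F (+) g F].

(* ||[f]|| = min over g in C^{k-2} of ||f + delta g|| (norms are <= 1). *)
Definition classnorm (R : realFieldType) (n k : nat) (f : {ffun ksub n k -> bool}) : R :=
  \big[Order.min/1]_(g : {ffun ksub n k.-1 -> bool})
     @cnorm R n k (addc f (@cobound n k.-1 k g)).

(* reduced H^{k-1}(Y; Z_2) <> 0 (k >= 2): a cocycle that is not a coboundary. *)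
Definition Hnonzero (n k : nat) (X : {set ksub n k.+1}) : bool :=
  [exists f : {ffun ksub n k -> bool},
     cocycle_on X f && [forall g : {ffun ksub n k.-1 -> bool}, f != @cobound n k.-1 k g]].

(* Every good (k+1)-set contains an even number of faces F with a(F) = 1, so a is a
   cocycle of Y^k(n,p) whichever good faces are kept, and the event reduces to a
   statement about the uniform cochain a alone: ||[a]|| >= c for a fixed ratio
   c = a0/b0 < 1/2 close to 1/2 (then a is not a coboundary, as ||[dg]|| = 0).
   If ||[a]|| < c then a lies at normalized distance < c from one of the 2^M
   coboundaries dg, M = C(n, k-1), so there are at most 2^M times as many such a as
   cochains of density < c; by a Chernoff bound the latter number is at most (2t)^N
   with t < 1 and N = C(n, k).  Since N/M = (n-k+1)/k grows, 2^M t^N tends to 0. *)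

From HB Require Import structures.
From mathcomp Require Import all_boot all_order all_algebra.
From mathcomp Require Import zify ring lra.
Set Implicit Arguments. Unset Strict Implicit. Unset Printing Implicit Defensive.
Import Order.TTheory GRing.Theory Num.Theory.
Local Open Scope ring_scope.

Lemma bernoulli (R : realDomainType) (x : R) n : -1 <= x -> 1 + x *+ n <= (1 + x) ^+ n.
Proof.
move=> hx; elim: n => [|n IH]; first by rewrite mulr0n addr0 expr0.
have x1 : 0 <= 1 + x by lra.
have sq : 0 <= x * x *+ n by rewrite mulrn_wge0 // -expr2 sqr_ge0.
rewrite exprS mulrS; apply: le_trans (ler_wpM2l x1 IH).
rewrite -mulrnAr in sq; nra.
Qed.

Lemma exists_expr_le (R : archiRealFieldType) (t e : R) :
  0 <= t < 1 -> 0 < e -> exists L, t ^+ L <= e.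
Proof.
case/andP=> t0 t1 e0.
have [-> | tn0] := eqVneq t 0; first by exists 1%N; rewrite expr1 ltW.
have tp : 0 < t by rewrite lt_neqAle eq_sym tn0.
set x := t^-1 - 1.
have x0 : 0 < x by rewrite subr_gt0 invf_gt1.
have tE : t = (1 + x)^-1 by rewrite addrC subrK invrK.
set L := Num.bound (e * x)^-1.
have hL : e^-1 < L%:R * x.
  rewrite -ltr_pdivrMr // -invfM.
  by apply: archi_boundP; rewrite invr_ge0 ltW ?mulr_gt0.
have x1 : 0 < 1 + x by lra.
exists L; rewrite tE exprVn invf_ple ?posrE ?exprn_gt0 //.
have := @bernoulli _ x L; rewrite -mulr_natl; lra.
Qed.

Lemma exists_geometric_tail (R : archiRealFieldType) (t eta : R) :
  0 <= t < 1 -> 0 < eta ->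
  exists L, forall M N : nat, (0 < M)%N -> (L * M <= N)%N -> 2 ^+ M * t ^+ N <= eta.
Proof.
move=> t01 eta0; set e : R := Num.min eta 1 / 2.
have e0 : 0 < e by rewrite divr_gt0 // lt_min eta0 ltr01.
have e2 : 2 * e = Num.min eta 1 by rewrite /e mulrC divfK // pnatr_eq0.
have [L tL] := exists_expr_le t01 e0; exists L => M N M0 LM.
case/andP: t01 => t0 /ltW t1.
have tail : 2 ^+ M * t ^+ N <= (2 * e) ^+ M.
  rewrite exprMn ler_pM2l ?exprn_gt0 //.
  apply: le_trans (ler_wiXn2l t0 t1 LM) _; rewrite exprM.
  by apply: lerXn2r; rewrite ?nnegrE ?exprn_ge0 // (le_trans _ tL) ?exprn_ge0.
have e_ge0 : 0 <= 2 * e by rewrite mulr_ge0 ?ltW.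
have e_le1 : 2 * e <= 1 by rewrite e2 ge_min lexx orbT.
apply: le_trans tail (le_trans (ler_iXnr M0 e_ge0 e_le1) _).
by rewrite e2 ge_min lexx.
Qed.

Lemma sum_ffun_expr (R : comPzSemiRingType) (T : finType) (x : R) :
  \sum_(f : {ffun T -> bool}) x ^+ #|[set i | f i]| = (1 + x) ^+ #|T|.
Proof.
rewrite -prodr_const.
under [RHS]eq_bigr do rewrite addrC -(big_bool _ (fun b => if b then x else 1)).
rewrite bigA_distr_bigA; apply: eq_bigr => f _.
by rewrite -big_mkcond prodr_const cardsE.
Qed.

Lemma sum_subsets (R : comPzSemiRingType) (U : finType) (G : {set U}) (p q : R) :
  \sum_(X : {set U} | X \subset G) p ^+ #|X| * q ^+ #|G :\: X| = (p + q) ^+ #|G|.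
Proof.
pose F i : R := if i \in G then p else 0.
pose H i : R := if i \in G then q else 1.
have -> : (p + q) ^+ #|G| = \prod_i (F i + H i).
  rewrite -prodr_const big_mkcond /=; apply: eq_bigr => i _.
  by rewrite /F /H; case: (i \in G); rewrite ?add0r.
rewrite bigA_distr big_mkcond /=; apply: eq_bigr => X _.
case: ifP => [sXG | /negbT /subsetPn [i iX niG]]; last first.
  by rewrite (bigD1 i) //= iX /F (negbTE niG) mul0r.
rewrite (bigID (mem G)) /= [X in _ = _ * X]big1 ?mulr1; last first.
  by move=> i niG; rewrite /H (negbTE niG); case: ifP => // /(subsetP sXG); rewrite (negbTE niG).
rewrite (bigID (mem X)) /= -!prodr_const; congr (_ * _); apply: eq_big => i.
- by case: (boolP (i \in X)) => [/(subsetP sXG) -> | _]; rewrite ?andbF.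
- by move=> iX; rewrite iX /F (subsetP sXG).
- by rewrite !inE andbC.
- by rewrite !inE => /andP [/negbTE niX iG]; rewrite niX /H iG.
Qed.

Lemma card_sparse_ffun_le (R : realFieldType) (T : finType) (a b : nat) (r : R) :
  0 < r <= 1 ->
  #|[set f : {ffun T -> bool} | (b * #|[set i | f i]| <= a * #|T|)%N]|%:R * r ^+ (a * #|T|)
    <= (1 + r ^+ b) ^+ #|T|.
Proof.
case/andP=> r0 r1; rewrite -sum_ffun_expr mulr_natl -sumr_const big_mkcond /=.
apply: ler_sum => f _; rewrite inE -exprM.
case: ifP => [sparse | _]; last by rewrite exprn_ge0 // ltW.
by rewrite ler_wiXn2l // ltW.
Qed.

Lemma exists_chernoff_ratio (R : realFieldType) (a b : nat) : (2 * a < b)%N ->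
  exists2 r : R, 0 < r <= 1 & 1 + r ^+ b < 2 * r ^+ a.
Proof.
(* r = 1/(1+d): Bernoulli gives r^b <= 1/(1+bd) and r^a >= 1-ad, and
   d = 1/(2ab+1) is small enough that 1 + 1/(1+bd) < 2(1-ad). *)
move=> ab.
set D : R := (2 * a * b).+1%:R.
have D0 : 0 < D by rewrite ltr0n.
set d := D^-1.
have d0 : 0 < d by rewrite invr_gt0.
have d1 : d <= 1 by rewrite invf_le1 // ler1n.
have dD : d * D = 1 by rewrite mulVf ?gt_eqF.
have d1_gt0 : 0 < 1 + d by lra.
exists (1 + d)^-1; first by rewrite invr_gt0 d1_gt0 invf_le1 //; lra.
have upper : (1 + d)^-1 ^+ b * (1 + d *+ b) <= 1.
  rewrite exprVn ler_pdivrMl ?exprn_gt0 // mulr1.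
  by apply: bernoulli; lra.
have lower : 1 - d *+ a <= (1 + d)^-1 ^+ a.
  have dN : -1 <= - d by lra.
  rewrite -mulNrn; apply: le_trans (bernoulli a dN) _.
  apply: lerXn2r; rewrite ?nnegrE ?invr_ge0; try lra.
  by rewrite -(ler_pM2r d1_gt0) mulVf ?gt_eqF //; nra.
move: upper lower; set y := _ ^+ b; set z := _ ^+ a => upper lower.
move: ab; rewrite -addn1 -(ler_nat R) natrD natrM => ab.
rewrite -[d *+ b]mulr_natr in upper; rewrite -[d *+ a]mulr_natr in lower.
rewrite /D -addn1 natrD !natrM in dD.
set A := a%:R in dD ab lower; set B := b%:R in dD ab upper.
have dB0 : 0 < 1 + d * B by rewrite ltr_pwDl // mulr_ge0 ?ler0n // ltW.
have gap : 1 < (1 - 2 * A * d) * (1 + d * B).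
  have e : 2 * A * B * d * d = d - d * d.
    by transitivity (d * (d * (2 * A * B + 1)) - d * d); [ring | rewrite dD mulr1].
  have hB : 0 <= d * (B - (2 * A + 1)) by rewrite mulr_ge0 ?subr_ge0 // ltW.
  have hd : 0 < d * d by rewrite mulr_gt0.
  nra.
have : y < 1 - 2 * A * d.
  by rewrite -(ltr_pM2r dB0); apply: le_lt_trans upper gap.
lra.
Qed.

Lemma exists_sparse_ffun_bound (R : realFieldType) (a b : nat) : (2 * a < b)%N ->
  exists2 t : R, 0 <= t < 1 & forall T : finType,
    #|[set f : {ffun T -> bool} | (b * #|[set i | f i]| <= a * #|T|)%N]|%:R
      <= (2 * t) ^+ #|T|.
Proof.
case/(exists_chernoff_ratio R) => r /andP [r0 r1] gap.
have ra : 0 < r ^+ a by rewrite exprn_gt0.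
have den : 0 < 2 * r ^+ a by rewrite mulr_gt0.
have num : 0 <= 1 + r ^+ b by rewrite addr_ge0 // exprn_ge0 // ltW.
exists ((1 + r ^+ b) / (2 * r ^+ a)).
  by rewrite divr_ge0 ?(ltW den) //= ltr_pdivrMr // mul1r.
have -> : 2 * ((1 + r ^+ b) / (2 * r ^+ a)) = (1 + r ^+ b) / r ^+ a.
  by field; apply: lt0r_neq0.
move=> T; rewrite exprMn exprVn.
rewrite ler_pdivlMr ?exprn_gt0 // -exprM.
by apply: card_sparse_ffun_le; rewrite r0.
Qed.

Lemma card_ksub n j : #|{: ksub n j}| = 'C(n, j).
Proof.
by rewrite card_sig -[in RHS](card_ord n) -card_draws; apply: eq_card => S; rewrite !inE.
Qed.

Lemma card_ksub_pred_gt0 n k : (k <= n.+1)%N -> (0 < #|{: ksub n k.-1}|)%N.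
Proof. by rewrite card_ksub bin_gt0; lia. Qed.

Lemma card_ksub_ratio n k L : (0 < k)%N -> (k * L + k <= n)%N ->
  (L * #|{: ksub n k.-1}| <= #|{: ksub n k}|)%N.
Proof.
move=> k0 hn; rewrite !card_ksub -(leq_pmul2l k0) mulnA.
have := mul_bin_left n k.-1; rewrite prednK // => ->.
by rewrite leq_mul2r; apply/orP; right; lia.
Qed.

Lemma big_addb_odd (T : finType) (P : pred T) (b : T -> bool) :
  \big[addb/false]_(i | P i) b i = odd #|[set i | P i && b i]|.
Proof.
rewrite cardsE -sum1_card big_mkcondr /= (big_morph odd oddD (erefl (odd 0))).
by apply: eq_bigr => i _; case: (b i).
Qed.

Section Cochains.

Variables n k : nat.
Variable R : realFieldType.
Implicit Types (a f : {ffun ksub n k -> bool}) (g : {ffun ksub n k.-1 -> bool}).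

Lemma cocycle_on_good a (X : {set ksub n k.+1}) : X \subset good a -> cocycle_on X a.
Proof.
move=> sX; apply/forall_inP => H /(subsetP sX); rewrite inE => even_H.
by rewrite /cobound ffunE big_addb_odd (negbTE even_H).
Qed.

Lemma addcK (h : {ffun ksub n k -> bool}) : involutive (fun f => addc f h).
Proof. by move=> f; apply/ffunP => F; rewrite !ffunE addbK. Qed.

Lemma cnorm_addcc f : cnorm R (addc f f) = 0.
Proof.
rewrite /cnorm (_ : [set F | _] = set0) ?cards0 ?mul0r //.
by apply/setP => F; rewrite !inE ffunE addbb.
Qed.

Lemma classnorm_le a g : classnorm R a <= cnorm R (addc a (cobound k g)).
Proof. by rewrite /classnorm (bigD1 g) //= ge_min lexx. Qed.

Lemma classnorm_ltP a (c : R) : c <= 1 ->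
  reflect (exists g, cnorm R (addc a (cobound k g)) < c) (classnorm R a < c).
Proof.
move=> c1; apply: (iffP idP) => [lt_ac | [g lt_gc]]; last first.
  exact: le_lt_trans (classnorm_le a g) lt_gc.
apply/existsP; apply: contraLR lt_ac => /existsPn all_ge; rewrite -leNgt.
apply: (big_ind (fun x => c <= x)) => // [x y cx cy | g _]; first by rewrite le_min cx cy.
by rewrite leNgt all_ge.
Qed.

Lemma Hnonzero_classnorm_gt0 a (X : {set ksub n k.+1}) :
  cocycle_on X a -> 0 < classnorm R a -> Hnonzero X.
Proof.
move=> cocyc pos; apply/existsP; exists a; rewrite cocyc /=.
apply/forallP => g; apply: contraTneq pos => ->.
by rewrite -leNgt -(cnorm_addcc (cobound k g)) classnorm_le.
Qed.

Lemma cnorm_lt_ratio f (a b : nat) :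
  (0 < b)%N -> cnorm R f < a%:R / b%:R ->
  (b * #|[set F | f F]| <= a * #|{: ksub n k}|)%N.
Proof.
move=> b0; rewrite /cnorm; have [N0 | N0] := posnP #|{: ksub n k}|.
  by have := max_card [set F | f F]; rewrite N0 leqn0 => /eqP ->; rewrite muln0.
rewrite ltr_pdivrMr ?ltr0n // mulrAC ltr_pdivlMr ?ltr0n // -!natrM ltr_nat.
by rewrite mulnC => /ltnW.
Qed.

Lemma card_classnorm_lt (c : R) : c <= 1 ->
  (#|[set a : {ffun ksub n k -> bool} | (classnorm R a < c)%R]|
     <= 2 ^ #|{: ksub n k.-1}| * #|[set f : {ffun ksub n k -> bool} | (cnorm R f < c)%R]|)%N.
Proof.
(* A union bound over g; each translation f |-> f + dg is a bijection. *)
move=> c1; pose close a g : nat := cnorm R (addc a (cobound k g)) < c.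
apply: (@leq_trans (\sum_a \sum_g close a g)).
  rewrite -sum1_card big_mkcond /=; apply: leq_sum => a _; rewrite inE.
  case: (classnorm_ltP a c1) => // -[g close_g] /=.
  by rewrite (bigD1 g) //= /close close_g.
rewrite exchange_big /= -card_bool -card_ffun -sum_nat_const; apply: eq_leq.
apply: eq_bigr => g _; rewrite -sum1_card [RHS]big_mkcond /=.
rewrite (reindex_inj (inv_inj (addcK (cobound k g)))) /=.
by apply: eq_bigr => a _; rewrite /close addcK inE.
Qed.

Lemma card_classnorm_lt_ratio (a b : nat) : (0 < b)%N -> a%:R / b%:R <= 1 :> R ->
  (#|[set f : {ffun ksub n k -> bool} | (classnorm R f < a%:R / b%:R)%R]|
     <= 2 ^ #|{: ksub n k.-1}| *
        #|[set f : {ffun ksub n k -> bool} | b * #|[set F | f F]| <= a * #|{: ksub n k}| ]|)%N.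
Proof.
move=> b0 c1; apply: (leq_trans (card_classnorm_lt c1)); rewrite leq_mul2l; apply/orP; right.
by apply/subset_leq_card/subsetP => f; rewrite !inE; apply: cnorm_lt_ratio.
Qed.

End Cochains.

Lemma Prob_ge (R : realFieldType) n k (p : R) (bad : pred {ffun ksub n k -> bool})
  (E : {ffun ksub n k -> bool} -> {set ksub n k.+1} -> bool) : 0 <= p <= 1 ->
  (forall a (X : {set ksub n k.+1}), ~~ bad a -> X \subset good a -> E a X) ->
  1 - (2%:R^-1) ^+ #|{: ksub n k}| * #|[set a | bad a]|%:R <= Prob p E.
Proof.
case/andP=> p0 p1 hE; set w : R := _ ^+ _.
have w0 : 0 <= w by rewrite exprn_ge0 // invr_ge0 ler0n.
have weight_ge0 a (X : {set ksub n k.+1}) : 0 <= weight p a X.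
  rewrite /weight mulr_ge0 //; case: ifP => // _.
  by rewrite mulr_ge0 // exprn_ge0 // subr_ge0.
have mass a : \sum_(X : {set ksub n k.+1}) weight p a X = w.
  rewrite -mulr_sumr -big_mkcond /= [X in _ * X](_ : _ = 1) ?mulr1 //.
  transitivity ((p + (1 - p)) ^+ #|good a|); last by rewrite subrKC expr1n.
  by rewrite -sum_subsets; apply: eq_bigr => X sX; rewrite cardsD (setIidPr sX).
have -> : 1 - w * #|[set a | bad a]|%:R = \sum_(a | ~~ bad a) w.
  have card_all : (#|[pred a | ~~ bad a]| + #|[set a | bad a]|)%N = (2 ^ #|{: ksub n k}|)%N.
    by rewrite addnC cardsE cardC card_ffun card_bool.
  rewrite sumr_const -[w *+ _]mulr_natr; apply/eqP; rewrite subr_eq -mulrDr -natrD card_all.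
  by rewrite natrX /w exprVn mulVf // expf_neq0 // pnatr_eq0.
rewrite /Prob big_mkcond /=; apply: ler_sum => a _.
case: ifP => [not_bad | _]; last by rewrite sumr_ge0 // => X _; rewrite mulr_ge0.
rewrite -(mass a); apply: ler_sum => X _.
case: (boolP (X \subset good a)) => [sX | nsX]; first by rewrite hE // mulr1.
by rewrite /weight (negbTE nsX) !mulr0 mul0r.
Qed.

Lemma exists_ratio_near_half (R : archiRealFieldType) (eps : R) : 0 < eps ->
  exists2 a : nat, (0 < a)%N & 2^-1 - eps <= a%:R / (2 * a).+2%:R.
Proof.
move=> eps0; set a := (Num.bound eps^-1).+1; exists a => //.
have ie : 0 <= eps^-1 by rewrite invr_ge0 ltW.
have ha : eps^-1 < a%:R by apply: lt_le_trans (archi_boundP ie) _; rewrite ler_nat.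
have a0 : 0 <= a%:R :> R by rewrite ler0n.
clearbody a.
have -> : (2 * a).+2%:R = 2 * a%:R + 2 :> R by rewrite -addn2 natrD natrM.
have -> : a%:R / (2 * a%:R + 2) = 2^-1 - (2 * a%:R + 2)^-1 :> R.
  by field; rewrite lt0r_neq0 // ltr_wpDl ?mulr_ge0.
rewrite lerD2l lerN2 invf_ple ?posrE //; lra.
Qed.

Theorem mainTheorem13 (R : archiRealFieldType) (k : nat) (hk : (2 <= k)%N)
  (p : nat -> R) (hp : forall n, 0 <= p n <= 1)
  (eps : R) (heps : 0 < eps) :
  forall eta : R, 0 < eta ->
  exists N : nat, forall n : nat, (N <= n)%N ->
    1 - eta <= Prob (p n)
      (fun (a : {ffun ksub n k -> bool}) (X : {set ksub n k.+1}) =>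
         [&& cocycle_on X a,
             2%:R^-1 - eps <= classnorm R a
           & Hnonzero X]).
Proof.
move=> eta eta0.
have [a a0 near_half] := exists_ratio_near_half heps.
set b := (2 * a).+2; set c : R := a%:R / b%:R.
have c0 : 0 < c by rewrite divr_gt0 ?ltr0n.
have c1 : c <= 1 by rewrite ler_pdivrMr ?ltr0n // mul1r ler_nat; lia.
have [t t01 sparse] := exists_sparse_ffun_bound R (leqnSn (2 * a).+1 : (2 * a < b)%N).
have [L tail] := exists_geometric_tail t01 eta0.
exists (k * L + k)%N => n hn.
set N := #|{: ksub n k}|; set M := #|{: ksub n k.-1}|.
have LM : (L * M <= N)%N by apply: card_ksub_ratio; lia.
have M0 : (0 < M)%N by apply: card_ksub_pred_gt0; lia.
apply: le_trans (Prob_ge (bad := fun f => classnorm R f < c) (hp n) _); last first.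
  move=> f X; rewrite -leNgt => c_le sX; have cocyc := cocycle_on_good sX.
  rewrite cocyc (le_trans near_half c_le) /=.
  exact: Hnonzero_classnorm_gt0 cocyc (lt_le_trans c0 c_le).
have := card_classnorm_lt_ratio n k (ltn0Sn _ : (0 < b)%N) c1.
rewrite -(ler_nat R) natrM natrX => card_bad.
rewrite lerD2l lerN2; apply: le_trans (tail M N M0 LM).
apply: le_trans (ler_wpM2l _ (le_trans card_bad (ler_wpM2l _ (sparse _)))) _;
  rewrite ?exprn_ge0 ?invr_ge0 ?ler0n //.
by rewrite mulrCA -exprMn mulrA mulVf ?pnatr_eq0 // mul1r.
Qed.
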